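(* Let $Z_0>0$, let $\mathbf Z_{AA}\in\mathbb C^{M\times M}$ be complex symmetric with $\mathbf R:=\operatorname{Re}\{\mathbf Z_{AA}\}$ positive definite, and let $\mathbf Z_A\in\mathbb C^{M\times M}$ be diagonal with $\mathbf Z_A$ and $\mathbf Z_A+Z_0\mathbf I_M$ invertible. Set $\boldsymbol\Gamma_A=(\mathbf Z_A+Z_0\mathbf I_M)^{-1}(\mathbf Z_A-Z_0\mathbf I_M)$, $\tilde{\boldsymbol\Gamma}_A=\boldsymbol\Gamma_A+\mathbf I_M$, and $\mathbf Z_A^D=-j\operatorname{Im}\{\mathbf Z_{AA}\}+Z_0\mathbf R^{1/2}\mathbf Z_A^{-1}\mathbf R^{1/2}$. Then $\mathbf Z_A^D+\mathbf Z_{AA}$ is invertible, and for arbitrary $\mathbf Z_{BU,k}\in\mathbb C^{1\times N}$, $\mathbf Z_{RU,k}\in\mathbb C^{1\times M}$, $\mathbf Z_{BR}\in\mathbb C^{M\times N}$, $\mathbf Z_{JU,qk}\in\mathbb C^{1\times N_J}$, $\mathbf Z_{JR,q}\in\mathbb C^{M\times N_J}$, writing $\mathbf W:=(\mathbf Z_A^D+\mathbf Z_{AA})^{-1}$: $$\tfrac{1}{2Z_0}\big(\mathbf Z_{BU,k}-\mathbf Z_{RU,k}\mathbf W\mathbf Z_{BR}\big)=\tfrac{1}{2Z_0}\big(\mathbf Z_{BU,k}-\tfrac12\tilde{\mathbf Z}_{RU,k}\tilde{\boldsymbol\Gamma}_A\tilde{\mathbf Z}_{BR}\big),$$ $$\tfrac{1}{2Z_0}\big(\mathbf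 Z_{JU,qk}-\mathbf Z_{RU,k}\mathbf W\mathbf Z_{JR,q}\big)=\tfrac{1}{2Z_0}\big(\mathbf Z_{JU,qk}-\tfrac12\tilde{\mathbf Z}_{RU,k}\tilde{\boldsymbol\Gamma}_A\tilde{\mathbf Z}_{JR,q}\big),$$ $$\tfrac{1}{2Z_0}\mathbf Z_{RU,k}\big(\mathbf I_M-\mathbf W\mathbf Z_{AA}^+\big)=\tfrac{1}{2Z_0}\big(\mathbf Z_{RU,k}-\tfrac12\tilde{\mathbf Z}_{RU,k}\tilde{\boldsymbol\Gamma}_A\bar{\mathbf Z}_{AA}\big),$$ $$\tfrac{1}{2Z_0}\big(\mathbf Z_{BR}-\mathbf Z_{AA}^+\mathbf W\mathbf Z_{BR}\big)=\tfrac{1}{2Z_0}\big(\mathbf Z_{BR}-\tfrac12\tilde{\mathbf Z}_{AA}\tilde{\boldsymbol\Gamma}_A\tilde{\mathbf Z}_{BR}\big),$$ $$\tfrac{1}{2Z_0}\big(\mathbf Z_{JR,q}-\mathbf Z_{AA}^+\mathbf W\mathbf Z_{JR,q}\big)=\tfrac{1}{2Z_0}\big(\mathbf Z_{JR,q}-\tfrac12\tilde{\mathbf Z}_{AA}\tilde{\boldsymbol\Gamma}_A\tilde{\mathbf Z}_{JR,q}\big),$$ $$\tfrac{1}{2Z_0}\big(\mathbf Z_{AA}^+-\mathbf Z_{AA}^+\mathbf W\mathbf Z_{AA}^+\big)=\tfrac{1}{2Z_0}\big(\mathbf Z_{AA}^+-\tfrac12\tilde{\mathbf Z}_{AA}\tilde{\boldsymbol\Gamma}_A\bar{\mathbf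 Z}_{AA}\big).$$ That is, replacing $\mathbf Z_A$ by $\mathbf Z_A^D$ in the $Z$-parameter channels $\mathbf H^E_{Z,k},\mathbf H^J_{Z,qk},\mathbf H^N_{Z,k},\breve{\mathbf H}^E_Z,\breve{\mathbf H}^J_{Z,q},\breve{\mathbf H}^N_Z$ yields the right-hand sides above.
   Context: $\mathbf Z_{AA}^+=\mathbf Z_{AA}+Z_0\mathbf I_M$; $\mathbf R^{1/2}$ is the symmetric positive definite square root of $\mathbf R=\operatorname{Re}\{\mathbf Z_{AA}\}$ and $\mathbf R^{-1/2}$ its inverse. Notation: $\tilde{\mathbf Z}_{RU,k}=\mathbf Z_{RU,k}\mathbf R^{-1/2}$, $\tilde{\mathbf Z}_{BR}=\mathbf R^{-1/2}\mathbf Z_{BR}$, $\tilde{\mathbf Z}_{JR,q}=\mathbf R^{-1/2}\mathbf Z_{JR,q}$, $\bar{\mathbf Z}_{AA}=\mathbf R^{-1/2}\mathbf Z_{AA}^+$, $\tilde{\mathbf Z}_{AA}=\mathbf Z_{AA}^+\mathbf R^{-1/2}$. The $Z$-parameter channels (for a load $\mathbf Z_A$) are $\mathbf H^E_{Z,k}=\frac{1}{2Z_0}(\mathbf Z_{BU,k}-\mathbf Z_{RU,k}(\mathbf Z_A+\mathbf Z_{AA})^{-1}\mathbf Z_{BR})$, $\mathbf H^J_{Z,qk}=\frac{1}{2Z_0}(\mathbf Z_{JU,qk}-\mathbf Z_{RU,k}(\mathbf Z_A+\mathbf Z_{AA})^{-1}\mathbf Z_{JR,q})$, $\mathbf H^N_{Z,k}=\frac{1}{2Z_0}\mathbf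 Z_{RU,k}(\mathbf I_M-(\mathbf Z_A+\mathbf Z_{AA})^{-1}\mathbf Z_{AA}^+)$, $\breve{\mathbf H}^E_Z=\frac{1}{2Z_0}(\mathbf Z_{BR}-\mathbf Z_{AA}^+(\mathbf Z_A+\mathbf Z_{AA})^{-1}\mathbf Z_{BR})$, $\breve{\mathbf H}^J_{Z,q}=\frac{1}{2Z_0}(\mathbf Z_{JR,q}-\mathbf Z_{AA}^+(\mathbf Z_A+\mathbf Z_{AA})^{-1}\mathbf Z_{JR,q})$, $\breve{\mathbf H}^N_Z=\frac{1}{2Z_0}(\mathbf Z_{AA}^+-\mathbf Z_{AA}^+(\mathbf Z_A+\mathbf Z_{AA})^{-1}\mathbf Z_{AA}^+)$. $\mathbf Z_A^D$ is the load impedance seen by the RIS elements when a power-matching decoupling network is inserted in front of the loads $\mathbf Z_A$. *)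

(* complex numbers as an arbitrary numClosedFieldType C
   (e.g. algC, or R[i] for a real-closed R). *)
From HB Require Import structures.
From mathcomp Require Import all_boot all_order all_algebra.
Set Implicit Arguments. Unset Strict Implicit. Unset Printing Implicit Defensive.
Import Order.TTheory GRing.Theory Num.Theory.
Local Open Scope ring_scope.

Section Defs.
Variable C : numClosedFieldType.

Definition Re_mx m n (A : 'M[C]_(m, n)) : 'M[C]_(m, n) := map_mx (fun z => 'Re z) A.
Definition Im_mx m n (A : 'M[C]_(m, n)) : 'M[C]_(m, n) := map_mx (fun z => 'Im z) A.

Definition real_mx m n (A : 'M[C]_(m, n)) : Prop := forall i j, A i j \is Num.real.

Definition real_posdef n (A : 'M[C]_n) : Prop :=
  real_mx A /\ A^T = A /\
  forall x : 'cV[C]_n, real_mx x -> x != 0 -> 0 < (x^T *m A *m x) 0 0.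

Definition is_spd_sqrt n (A S : 'M[C]_n) : Prop :=
  real_posdef S /\ S *m S = A.
End Defs.

(* The decoupled load makes [Z_AD + Z_AA] the congruence [R^(1/2) (Z_A^-1 (Z_A + Z0)) R^(1/2)]:
   adding [Z_AA = R + i Im Z_AA] cancels the reactive term. Hence
   [(Z_AD + Z_AA)^-1 = R^(-1/2) (Z_A + Z0)^-1 Z_A R^(-1/2)], and
   [(Z_A + Z0)^-1 Z_A = (Gamma_A + 1) / 2]; the six channel identities follow by
   substituting this inverse. *)

From HB Require Import structures.
From mathcomp Require Import all_boot all_order all_algebra.
Set Implicit Arguments.
Unset Strict Implicit.
Unset Printing Implicit Defensive.

Import Order.TTheory GRing.Theory Num.Theory.
Local Open Scope ring_scope.

Section RealImaginaryParts.
Variable C : numClosedFieldType.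

Lemma mx_Crect m n (A : 'M[C]_(m, n)) : A = Re_mx A + 'i *: Im_mx A.
Proof. by apply/matrixP => i j; rewrite !mxE -Crect. Qed.

Lemma Re_mxE m n (A : 'M[C]_(m, n)) :
  Re_mx A = 2^-1 *: (A + map_mx Num.conj A).
Proof. by apply/matrixP => i j; rewrite !mxE ReE mulrC. Qed.

Lemma Im_mxE m n (A : 'M[C]_(m, n)) :
  Im_mx A = 2^-1 *: ('i *: (map_mx Num.conj A - A)).
Proof. by apply/matrixP => i j; rewrite !mxE ImE mulrC. Qed.

Lemma real_mx_Re m n (A : 'M[C]_(m, n)) : real_mx (Re_mx A).
Proof. by move=> i j; rewrite mxE Creal_Re. Qed.

Lemma real_mx_Im m n (A : 'M[C]_(m, n)) : real_mx (Im_mx A).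
Proof. by move=> i j; rewrite mxE Creal_Im. Qed.

Lemma real_mx_conj m n (A : 'M[C]_(m, n)) : real_mx A -> map_mx Num.conj A = A.
Proof. by move=> Ar; apply/matrixP => i j; rewrite mxE conj_Creal. Qed.

Lemma Re_mxMr m n p (A : 'M[C]_(m, n)) (B : 'M[C]_(n, p)) :
  real_mx B -> Re_mx (A *m B) = Re_mx A *m B.
Proof.
by move=> Br; rewrite !Re_mxE map_mxM (real_mx_conj Br) -scalemxAl mulmxDl.
Qed.

Lemma Im_mxMr m n p (A : 'M[C]_(m, n)) (B : 'M[C]_(n, p)) :
  real_mx B -> Im_mx (A *m B) = Im_mx A *m B.
Proof.
by move=> Br; rewrite !Im_mxE map_mxM (real_mx_conj Br) -!scalemxAl mulmxBl.
Qed.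

End RealImaginaryParts.

Section RealPosdef.
Variables (C : numClosedFieldType) (n : nat) (R : 'M[C]_n).
Hypothesis Rpd : real_posdef R.

Lemma real_posdef_ker_real (x : 'rV[C]_n) : real_mx x -> x *m R = 0 -> x = 0.
Proof.
move=> xr xR; apply/eqP; apply: contraT => x0.
have [_ [_ Rpos]] := Rpd.
have xTr : real_mx x^T by move=> i j; rewrite mxE.
have := Rpos x^T xTr.
by rewrite trmxK xR mul0mx mxE ltxx trmx_eq0; apply.
Qed.

Lemma real_posdef_unitmx : R \in unitmx.
Proof.
have [Rr _] := Rpd.
rewrite -row_free_unit -kermx_eq0; apply/rowV0Pn => -[u /sub_kermxP uR].
apply/negP; rewrite negbK [u]mx_Crect.
have Re0 : Re_mx u = 0.
  apply: real_posdef_ker_real (real_mx_Re u) _.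
  by rewrite -Re_mxMr // uR; apply/matrixP => i j; rewrite !mxE raddf0.
have Im0 : Im_mx u = 0.
  apply: real_posdef_ker_real (real_mx_Im u) _.
  by rewrite -Im_mxMr // uR; apply/matrixP => i j; rewrite !mxE raddf0.
by rewrite Re0 Im0 scaler0 addr0.
Qed.

End RealPosdef.

Section LinearAlgebra.
Variables (R : comUnitRingType) (n : nat).
Implicit Types (A B : 'M[R]_n) (z : R).

Lemma invmxM A B :
  A \in unitmx -> B \in unitmx -> invmx (A *m B) = invmx B *m invmx A.
Proof.
move=> Au Bu; have ABu : A *m B \in unitmx by rewrite unitmx_mul Au.
have BAAB : invmx B *m invmx A *m (A *m B) = 1%:M.
  by rewrite mulmxA mulmxKV // mulVmx.
by rewrite -[LHS]mul1mx -BAAB -mulmxA mulmxV // mulmx1.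
Qed.

Lemma cayley_add1 A z : A + z%:M \in unitmx ->
  invmx (A + z%:M) *m (A - z%:M) + 1%:M = invmx (A + z%:M) *m (A *+ 2).
Proof.
move=> Pu; rewrite -(mulVmx Pu) -mulmxDr; congr (_ *m _).
by rewrite addrACA addNr addr0 mulr2n.
Qed.

End LinearAlgebra.

Section DecoupledLoad.
Variables (C : numClosedFieldType) (M : nat) (z : C) (Z ZA S : 'M[C]_M).
Hypotheses (ReZ : Re_mx Z = S *m S) (ZAu : ZA \in unitmx).

Let ZD := - ('i *: Im_mx Z) + z *: (S *m invmx ZA *m S).

Lemma decoupled_load_addE : ZD + Z = S *m (invmx ZA *m (ZA + z%:M)) *m S.
Proof.
rewrite /ZD [X in _ + X = _]mx_Crect ReZ addrC -!addrA addNKr.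
rewrite mulmxDr mulVmx // mul_mx_scalar mulmxDr mulmxDl mulmx1.
by rewrite -scalemxAr -scalemxAl.
Qed.

Hypotheses (Su : S \in unitmx) (ZAzu : ZA + z%:M \in unitmx).

Lemma decoupled_load_add_unitmx : ZD + Z \in unitmx.
Proof. by rewrite decoupled_load_addE !unitmx_mul Su unitmx_inv ZAu ZAzu. Qed.

Lemma decoupled_load_add_inv :
  invmx (ZD + Z) =
  2^-1 *: (invmx S *m (invmx (ZA + z%:M) *m (ZA - z%:M) + 1%:M) *m invmx S).
Proof.
rewrite decoupled_load_addE !invmxM ?unitmx_mul ?unitmx_inv ?Su ?ZAu // invmxK mulmxA.
rewrite cayley_add1 // -scaler_nat -!scalemxAr -!scalemxAl scalerA.
by rewrite mulVf ?pnatr_eq0 // scale1r.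
Qed.

End DecoupledLoad.

Theorem theorem2 (C : numClosedFieldType) (M N NJ : nat) (Z0 : C)
    (ZAA ZA Rh : 'M[C]_M) :
  0 < Z0 ->
  ZAA^T = ZAA ->
  real_posdef (Re_mx ZAA) ->
  is_diag_mx ZA ->
  ZA \in unitmx ->
  ZA + Z0%:M \in unitmx ->
  (* Rh = R^{1/2}, the symmetric positive definite square root of R = Re{Z_AA} *)
  is_spd_sqrt (Re_mx ZAA) Rh ->
  let Rih := invmx Rh in
  let GammaA := invmx (ZA + Z0%:M) *m (ZA - Z0%:M) in
  let GammaAt := GammaA + 1%:M in
  let ZAD := - ('i *: Im_mx ZAA) + Z0 *: (Rh *m invmx ZA *m Rh) in
  let ZAAp := ZAA + Z0%:M in
  let ZAAbar := Rih *m ZAAp in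
  let ZAAtil := ZAAp *m Rih in
  let W := invmx (ZAD + ZAA) in
  let c := (2 * Z0)^-1 in
  (ZAD + ZAA \in unitmx) /\
  forall (ZBU : 'rV[C]_N) (ZRU : 'rV[C]_M) (ZBR : 'M[C]_(M, N))
         (ZJU : 'rV[C]_NJ) (ZJR : 'M[C]_(M, NJ)),
  let ZRUt := ZRU *m Rih in
  let ZBRt := Rih *m ZBR in
  let ZJRt := Rih *m ZJR in
  c *: (ZBU - ZRU *m W *m ZBR) = c *: (ZBU - 2^-1 *: (ZRUt *m GammaAt *m ZBRt)) /\
      c *: (ZJU - ZRU *m W *m ZJR) = c *: (ZJU - 2^-1 *: (ZRUt *m GammaAt *m ZJRt)) /\
      c *: (ZRU *m (1%:M - W *m ZAAp)) = c *: (ZRU - 2^-1 *: (ZRUt *m GammaAt *m ZAAbar)) /\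
      c *: (ZBR - ZAAp *m W *m ZBR) = c *: (ZBR - 2^-1 *: (ZAAtil *m GammaAt *m ZBRt)) /\
      c *: (ZJR - ZAAp *m W *m ZJR) = c *: (ZJR - 2^-1 *: (ZAAtil *m GammaAt *m ZJRt)) /\
      c *: (ZAAp - ZAAp *m W *m ZAAp) = c *: (ZAAp - 2^-1 *: (ZAAtil *m GammaAt *m ZAAbar)).
Proof.
move=> _ _ _ _ ZAu ZAzu [Rhpd ReZAA] Rih GammaA GammaAt ZAD ZAAp ZAAbar ZAAtil W c.
have Rhu := real_posdef_unitmx Rhpd.
split; first exact: decoupled_load_add_unitmx.
move=> ZBU ZRU ZBR ZJU ZJR ZRUt ZBRt ZJRt.
have -> : W = 2^-1 *: (Rih *m GammaAt *m Rih) by exact: decoupled_load_add_inv.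
rewrite /ZRUt /ZBRt /ZJRt /ZAAbar /ZAAtil mulmxBr mulmx1.
by rewrite -!(scalemxAl, scalemxAr) !mulmxA; do !split.
Qed.
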